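(* Let $\gamma\in[0,1)$. For a bounded function $U:\mathbb{R}^n\to\mathbb{R}$ define the Bellman backup $$B[U](x)=\min\Big\{c(x),\ \max\big\{r(x),\ \gamma\max_{u\in\mathcal{U}}\min_{d\in\mathcal{D}} U(f(x,u,d))\big\}\Big\}.$$ Then the value function $V$ defined in the context is the unique (bounded) solution of $V=B[V]$, and for all bounded functions $V_1,V_2:\mathbb{R}^n\to\mathbb{R}$, $\|B[V_1]-B[V_2]\|_\infty\le\gamma\|V_1-V_2\|_\infty$.
   Context: Setting: States $x\in\mathbb{R}^n$; compact sets $\mathcal{U}\subseteq\mathbb{R}^m$ (controls) and $\mathcal{D}\subseteq\mathbb{R}^\ell$ (disturbances); dynamics $f:\mathbb{R}^n\times\mathcal{U}\times\mathcal{D}\to\mathbb{R}^n$, Lipschitz continuous in the state. For sequences $\mathbf{u}=\{u_t\}_{t\ge0}\subset\mathcal{U}$, $\mathbf{d}=\{d_t\}_{t\ge0}\subset\mathcal{D}$, the trajectory is $\xi_x^{\mathbf{u},\mathbf{d}}(0)=x$, $\xi_x^{\mathbf{u},\mathbf{d}}(t+1)=f(\xi_x^{\mathbf{u},\mathbf{d}}(t),u_t,d_t)$ for $t\in\mathbb{Z}_+$. Let $r,c:\mathbb{R}^n\to\mathbb{R}$ be bounded Lipschitz continuous functions. A map $\phi$ from control sequences to disturbance sequences is a non-anticipative strategy if whenever $u_t=\bar u_t$ for all $t\in\{0,\dots,T\}$, then $\phi(\mathbf{u})_t=\phi(\bar{\mathbf{u}})_t$ for all $t\in\{0,\dots,T\}$;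 $\Phi$ is the set of all such strategies. Value function: $$V(x)=\inf_{\phi\in\Phi}\ \sup_{\mathbf{u}}\ \sup_{t\in\mathbb{Z}_+}\ \min\Big\{\gamma^t r\big(\xi_x^{\mathbf{u},\phi(\mathbf{u})}(t)\big),\ \min_{\tau=0,\dots,t}\gamma^\tau c\big(\xi_x^{\mathbf{u},\phi(\mathbf{u})}(\tau)\big)\Big\}$$ (the paper writes $\max_{\mathbf{u}}$ over control sequences). $\|\cdot\|_\infty$ is the supremum norm over $\mathbb{R}^n$. *)

From HB Require Import structures.
From mathcomp Require Import all_boot all_order all_algebra.
From mathcomp Require Import all_classical all_reals all_analysis.
Set Implicit Arguments. Unset Strict Implicit. Unset Printing Implicit Defensive.
Import Order.TTheory GRing.Theory Num.Theory.
Import numFieldNormedType.Exports.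
Local Open Scope classical_set_scope.
Local Open Scope ring_scope.

Section Defs.
Variables (R : realType) (n m l : nat).
Local Notation X := 'rV[R]_n.
Local Notation Uv := 'rV[R]_m.
Local Notation Dv := 'rV[R]_l.

Definition lipschitz_fun (g : X -> R) : Prop :=
  exists L : R, forall x y, `|g x - g y| <= L * `|x - y|.

Definition lipschitz_in_state (Ucal : set Uv) (Dcal : set Dv)
  (f : X -> Uv -> Dv -> X) : Prop :=
  exists L : R, forall x y u d, Ucal u -> Dcal d ->
    `|f x u d - f y u d| <= L * `|x - y|.

Definition supnorm (g : X -> R) : R := sup [set `|g x| | x in [set: X]].

Fixpoint traj (f : X -> Uv -> Dv -> X) (x : X) (u : nat -> Uv) (d : nat -> Dv)
  (t : nat) : X :=
  match t with
  | 0 => x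
  | t'.+1 => f (traj f x u d t') (u t') (d t')
  end.

Definition seq_in (T : Type) (A : set T) (s : nat -> T) : Prop := forall t, A (s t).

Definition nonanticipative (Ucal : set Uv) (Dcal : set Dv)
  (phi : (nat -> Uv) -> (nat -> Dv)) : Prop :=
  (forall u, seq_in Ucal u -> seq_in Dcal (phi u)) /\
  (forall u ubar T, seq_in Ucal u -> seq_in Ucal ubar ->
     (forall t, (t <= T)%N -> u t = ubar t) ->
     forall t, (t <= T)%N -> phi u t = phi ubar t).

Fixpoint runmin (gamma : R) (c : X -> R) (xi : nat -> X) (t : nat) : R :=
  match t with
  | 0 => c (xi 0%N)
  | t'.+1 => Num.min (runmin gamma c xi t') (gamma ^+ t'.+1 * c (xi t'.+1))
  end.

Definition payoff (gamma : R) (f : X -> Uv -> Dv -> X) (r c : X -> R)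
  (x : X) (u : nat -> Uv) (d : nat -> Dv) : R :=
  sup [set Num.min (gamma ^+ t * r (traj f x u d t)) (runmin gamma c (traj f x u d) t)
      | t in [set: nat]].

Definition value (gamma : R) (Ucal : set Uv) (Dcal : set Dv)
  (f : X -> Uv -> Dv -> X) (r c : X -> R) (x : X) : R :=
  inf [set sup [set payoff gamma f r c x u (phi u) | u in seq_in Ucal]
      | phi in nonanticipative Ucal Dcal].

(* Bellman backup (max/min over U, D read as sup/inf) *)
Definition bellman (gamma : R) (Ucal : set Uv) (Dcal : set Dv)
  (f : X -> Uv -> Dv -> X) (r c : X -> R) (W : X -> R) (x : X) : R :=
  Num.min (c x)
    (Num.max (r x)
       (gamma * sup [set inf [set W (f x u d) | d in Dcal] | u in Ucal])).

End Defs.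

From HB Require Import structures.
From mathcomp Require Import all_boot all_order all_algebra.
From mathcomp Require Import all_classical all_reals all_analysis.
From mathcomp Require Import lra.
Set Implicit Arguments.
Unset Strict Implicit.
Unset Printing Implicit Defensive.

Import Order.TTheory GRing.Theory Num.Theory.
Import numFieldNormedType.Exports.
Local Open Scope classical_set_scope.
Local Open Scope ring_scope.

(** The payoff of a pair of sequences obeys the one-step recursion
    [payoff x u d = backup x (payoff (f x u_0 d_0) u' d')] for the shifted
    sequences [u'], [d'], where [backup x y = min (c x) (max (r x) (gamma y))]
    is nondecreasing and [gamma]-Lipschitz in [y] and therefore commutes with
    suprema. A non-anticipative strategy splits into a first disturbance that
    depends on [u_0] only and a non-anticipative strategy for the tail;
    conversely, an [e]-optimal first disturbance glued to [e]-optimal tail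
    strategies is non-anticipative. The two directions give [V = B V]. The
    contraction estimate comes from the Lipschitz bound on [backup] and the
    nonexpansiveness of [W |-> sup_u inf_d W (f x u d)]; with [gamma < 1] it
    forces any bounded fixed point to coincide with [V]. *)

Section SupInfImage.
Variables (R : realType) (T : Type).
Implicit Types (A : set T) (F : T -> R) (b : R).

Lemma image_le_sup A F b v :
  (forall w, A w -> F w <= b) -> A v -> F v <= sup [set F w | w in A].
Proof.
move=> Fb Av; apply: sup_upper_bound; last by exists v.
by split; [exists (F v), v | exists b => _ [w Aw <-]; exact: Fb].
Qed.

Lemma sup_image_le A F b :
  A !=set0 -> (forall w, A w -> F w <= b) -> sup [set F w | w in A] <= b.
Proof.
by move=> A0 Fb; apply: ge_sup => [|_ [w Aw <-]]; [exact: image_nonempty | exact: Fb].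
Qed.

Lemma inf_le_image A F b v :
  (forall w, A w -> b <= F w) -> A v -> inf [set F w | w in A] <= F v.
Proof. by move=> Fb Av; apply: ge_inf; [exists b => _ [w Aw <-]; exact: Fb | exists v]. Qed.

Lemma inf_image_ge A F b :
  A !=set0 -> (forall w, A w -> b <= F w) -> b <= inf [set F w | w in A].
Proof.
by move=> A0 Fb; apply: lb_le_inf => [|_ [w Aw <-]]; [exact: image_nonempty | exact: Fb].
Qed.

Lemma sup_image_comp A F b (g : R -> R) :
  A !=set0 -> (forall w, A w -> F w <= b) ->
  {homo g : y z / y <= z} -> (forall y z, `|g y - g z| <= `|y - z|) ->
  sup [set g (F w) | w in A] = g (sup [set F w | w in A]).
Proof.
move=> A0 Fb g_homo g_dist; set s := sup [set F w | w in A].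
have Fs w : A w -> F w <= s by move=> Aw; exact: image_le_sup Fb Aw.
have gFs w : A w -> g (F w) <= g s by move=> /Fs/g_homo.
apply/eqP; rewrite eq_le sup_image_le //=; apply/ler_addgt0Pr => e e0.
have [_ [v Av <-] ltv] : exists2 y, [set F w | w in A] y & s - e < y.
  by apply: sup_gt; [exact: image_nonempty | rewrite gtrDl oppr_lt0].
apply: le_trans (ler_distlDr (g_dist s (F v))) _; apply: lerD.
  exact: image_le_sup gFs Av.
by rewrite ger0_norm ?subr_ge0 ?Fs //; lra.
Qed.

Lemma ler_norm_sup_image A F M :
  A !=set0 -> (forall w, A w -> `|F w| <= M) -> `|sup [set F w | w in A]| <= M.
Proof.
move=> A0 FM; have [v Av] := A0.
have Fle w : A w -> F w <= M by move=> /FM/ler_normlW.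
rewrite ler_norml sup_image_le // andbT.
exact: le_trans (lerNnormlW (FM v Av)) (image_le_sup Fle Av).
Qed.

Lemma ler_norm_inf_image A F M :
  A !=set0 -> (forall w, A w -> `|F w| <= M) -> `|inf [set F w | w in A]| <= M.
Proof.
move=> A0 FM; have [v Av] := A0.
have Fge w : A w -> - M <= F w by move=> /FM/lerNnormlW.
rewrite ler_norml inf_image_ge //=.
exact: le_trans (inf_le_image Fge Av) (ler_normlW (FM v Av)).
Qed.

Lemma inf_adherent_choice (S : Type) A (G : S -> T -> R) e :
  A !=set0 -> 0 < e ->
  exists delta : S -> T,
    forall s, A (delta s) /\ G s (delta s) < inf [set G s w | w in A] + e.
Proof.
move=> A0 e0.
suff /boolp.choice[delta ?] : forall s, exists w,
    A w /\ G s w < inf [set G s w | w in A] + e by exists delta.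
move=> s; have lt_e : inf [set G s w | w in A] < inf [set G s w | w in A] + e.
  by rewrite ltrDl.
have [_ [w Aw <-] ?] := inf_lt (image_nonempty (G s) A0) lt_e.
by exists w.
Qed.

End SupInfImage.

Lemma sup_nat_recl (R : realType) (F : nat -> R) b : (forall t, F t <= b) ->
  sup [set F t | t in [set: nat]] = Num.max (F 0%N) (sup [set F t.+1 | t in [set: nat]]).
Proof.
move=> Fb; have Fb' (t : nat) : [set: nat] t -> F t <= b by move=> _; exact: Fb.
apply/eqP; rewrite eq_le ge_max (image_le_sup Fb') //=; apply/andP; split.
  apply: sup_image_le => [|[|t] _]; first by exists 0%N.
    by rewrite le_max lexx.
  by rewrite le_max (image_le_sup (fun t _ => Fb t.+1)) ?orbT.
by apply: sup_image_le => [|t _]; [exists 0%N | exact: image_le_sup Fb' _].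
Qed.

Section MinMaxDist.
Variable R : realDomainType.
Implicit Types a y z M : R.

Lemma ler_norm_min a y M : `|a| <= M -> `|y| <= M -> `|Num.min a y| <= M.
Proof. by rewrite minEle; case: ifP. Qed.

Lemma ler_dist_min2l a y z : `|Num.min a y - Num.min a z| <= `|y - z|.
Proof.
wlog yz : y z / y <= z.
  by move=> H; case/orP: (le_total y z) => /H //; rewrite distrC [X in _ <= X]distrC.
rewrite distrC [`|y - _|]distrC !ger0_norm ?subr_ge0 ?le_min2 //.
by rewrite !minEle; case: ifP; case: ifP => ? ?; lra.
Qed.

Lemma ler_dist_max2l a y z : `|Num.max a y - Num.max a z| <= `|y - z|.
Proof.
wlog yz : y z / y <= z.
  by move=> H; case/orP: (le_total y z) => /H //; rewrite distrC [X in _ <= X]distrC.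
rewrite distrC [`|y - _|]distrC !ger0_norm ?subr_ge0 ?le_max2 //.
by rewrite !maxEle; case: ifP; case: ifP => ? ?; lra.
Qed.

End MinMaxDist.

Section SupNorm.
Variables (R : realType) (n : nat).
Implicit Types W : 'rV[R]_n -> R.

Lemma bounded_funP (T : pointedType) (W : T -> R) :
  bounded_fun W <-> exists M, forall x, `|W x| <= M.
Proof.
rewrite /= (@ex_bound _ _ _ W _ (globally_properfilter (a := point) I)).
by split=> -[M HM]; exists M => x; [exact: HM | move=> _; exact: HM].
Qed.

Lemma bounded_funB W1 W2 : bounded_fun W1 -> bounded_fun W2 -> bounded_fun (W1 \- W2).
Proof.
move=> /bounded_funP[M1 HM1] /bounded_funP[M2 HM2]; apply/bounded_funP.
by exists (M1 + M2) => x; apply: le_trans (ler_normB _ _) (lerD _ _).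
Qed.

Lemma ler_norm_supnorm W x : bounded_fun W -> `|W x| <= supnorm W.
Proof.
move=> /bounded_funP[M HM].
by apply: (image_le_sup (F := fun x => `|W x|) (b := M)) => // y _; exact: HM.
Qed.

Lemma supnorm_le W k : (forall x, `|W x| <= k) -> supnorm W <= k.
Proof. by move=> Wk; apply: sup_image_le => [|x _]; [exists 0 | exact: Wk]. Qed.

Lemma supnorm_contraction_eq W1 W2 k : k < 1 ->
  bounded_fun W1 -> bounded_fun W2 ->
  supnorm (W1 \- W2) <= k * supnorm (W1 \- W2) -> W1 = W2.
Proof.
move=> k1 b1 b2 contr; have b12 := bounded_funB b1 b2.
have s0 : 0 <= supnorm (W1 \- W2) := le_trans (normr_ge0 _) (ler_norm_supnorm 0 b12).
have s_le0 : supnorm (W1 \- W2) <= 0 by nra.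
apply/funext => x; apply/eqP; rewrite -subr_eq0 -normr_le0.
exact: le_trans (ler_norm_supnorm x b12) s_le0.
Qed.

End SupNorm.

Definition scons (T : Type) (a : T) (s : nat -> T) : nat -> T :=
  fun t => if t is k.+1 then s k else a.

Lemma seq_in_scons (T : Type) (A : set T) a s : A a -> seq_in A s -> seq_in A (scons a s).
Proof. by move=> Aa As; case. Qed.

Section Backup.
Variables (R : realType) (n : nat) (r c : 'rV[R]_n -> R) (gamma : R).
Hypothesis gamma_ge0 : 0 <= gamma.

Definition backup x y := Num.min (c x) (Num.max (r x) (gamma * y)).

Lemma backup_homo x : {homo backup x : y z / y <= z}.
Proof. by move=> y z yz; rewrite le_min2 // le_max2 // ler_wpM2l. Qed.

Lemma ler_dist_backup x y z : `|backup x y - backup x z| <= gamma * `|y - z|.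
Proof.
apply: le_trans (ler_dist_min2l _ _ _) _; apply: le_trans (ler_dist_max2l _ _ _) _.
by rewrite -mulrBr normrM ger0_norm.
Qed.

Hypothesis gamma_le1 : gamma <= 1.

Lemma backup_nonexpansive x y z : `|backup x y - backup x z| <= `|y - z|.
Proof. exact: le_trans (ler_dist_backup x y z) (ler_piMl _ gamma_le1). Qed.

Lemma backup_leD x y e : 0 <= e -> backup x (y + e) <= backup x y + e.
Proof.
move=> e0; apply: ler_distlDr; apply: le_trans (backup_nonexpansive _ _ _) _.
by rewrite addrAC subrr add0r ger0_norm.
Qed.

End Backup.

Section Payoff.
Variables (R : realType) (n m l : nat).
Local Notation X := 'rV[R]_n.
Variables (f : X -> 'rV[R]_m -> 'rV[R]_l -> X) (r c : X -> R) (gamma M : R).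
Hypotheses (gamma_ge0 : 0 <= gamma) (gamma_le1 : gamma <= 1).
Hypotheses (r_le : forall x, `|r x| <= M) (c_le : forall x, `|c x| <= M).

Definition stage_payoff (xi : nat -> X) t :=
  Num.min (gamma ^+ t * r (xi t)) (runmin gamma c xi t).

Lemma payoffE x u d :
  payoff gamma f r c x u d = sup [set stage_payoff (traj f x u d) t | t in [set: nat]].
Proof. by []. Qed.

Lemma traj_succ x u d :
  traj f x u d \o succn = traj f (f x (u 0%N) (d 0%N)) (u \o succn) (d \o succn).
Proof. by apply/funext; elim => //= t ->. Qed.

Lemma runmin_succ xi t :
  runmin gamma c xi t.+1 = Num.min (c (xi 0%N)) (gamma * runmin gamma c (xi \o succn) t).
Proof.
elim: t => [|t /= ->]; first by rewrite /= expr1.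
by rewrite minr_pMr // -minA exprS -mulrA.
Qed.

Lemma stage_payoff_succ xi t :
  stage_payoff xi t.+1 = Num.min (c (xi 0%N)) (gamma * stage_payoff (xi \o succn) t).
Proof. by rewrite /stage_payoff runmin_succ exprS -mulrA minr_pMr // minCA. Qed.

Lemma ler_norm_discount t a : `|gamma ^+ t * a| <= `|a|.
Proof. by rewrite normrM ger0_norm ?exprn_ge0 // ler_piMl // exprn_ile1. Qed.

Lemma ler_norm_runmin xi t : `|runmin gamma c xi t| <= M.
Proof.
elim: t => [|t IH] /=; first exact: c_le.
exact/(ler_norm_min IH)/(le_trans (ler_norm_discount _ _) (c_le _)).
Qed.

Lemma ler_norm_stage_payoff xi t : `|stage_payoff xi t| <= M.
Proof. exact/ler_norm_min/ler_norm_runmin/(le_trans (ler_norm_discount _ _) (r_le _)). Qed.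

Lemma ler_norm_payoff x u d : `|payoff gamma f r c x u d| <= M.
Proof.
by apply: ler_norm_sup_image => [|t _]; [exists 0%N | exact: ler_norm_stage_payoff].
Qed.

Lemma payoff_succ x u d :
  payoff gamma f r c x u d =
  backup r c gamma x (payoff gamma f r c (f x (u 0%N) (d 0%N)) (u \o succn) (d \o succn)).
Proof.
have nat0 : [set: nat] !=set0 by exists 0%N.
have le_M xi t : [set: nat] t -> stage_payoff xi t <= M.
  by move=> _; exact/ler_normlW/ler_norm_stage_payoff.
rewrite !payoffE -traj_succ; set xi := traj f x u d.
have step t : Num.max (stage_payoff xi 0) (stage_payoff xi t.+1) =
              backup r c gamma x (stage_payoff (xi \o succn) t).
  by rewrite stage_payoff_succ /stage_payoff /= expr0 mul1r [Num.min (r _) _]minC -min_maxr.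
rewrite -(sup_image_comp nat0 (le_M _) (backup_homo r c gamma_ge0 x)
  (backup_nonexpansive r c gamma_ge0 gamma_le1 x)).
have max_homo : {homo Num.max (stage_payoff xi 0) : y z / y <= z}.
  by move=> y z yz; rewrite le_max2.
rewrite -(eq_imagel (fun t _ => step t)).
rewrite (sup_image_comp nat0 (fun t => le_M xi t.+1) max_homo (ler_dist_max2l _)).
by rewrite (sup_nat_recl (fun t => le_M xi t I)).
Qed.

End Payoff.

Section Value.
Variables (R : realType) (n m l : nat).
Local Notation X := 'rV[R]_n.
Local Notation Uv := 'rV[R]_m.
Local Notation Dv := 'rV[R]_l.
Local Notation strategy := ((nat -> Uv) -> nat -> Dv).
Variables (Ucal : set Uv) (Dcal : set Dv) (f : X -> Uv -> Dv -> X) (r c : X -> R).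
Variable gamma : R.
Hypotheses (Ucal0 : Ucal !=set0) (Dcal0 : Dcal !=set0) (gamma_ge0 : 0 <= gamma).

Local Notation backup := (backup r c gamma).
Local Notation payoff := (payoff gamma f r c).
Local Notation V := (value gamma Ucal Dcal f r c).

Definition strategy_value x (phi : strategy) :=
  sup [set payoff x u (phi u) | u in seq_in Ucal].

Definition minimax (W : X -> R) x :=
  sup [set inf [set W (f x u d) | d in Dcal] | u in Ucal].

Lemma valueE x : V x = inf [set strategy_value x phi | phi in nonanticipative Ucal Dcal].
Proof. by []. Qed.

Lemma bellmanE W x : bellman gamma Ucal Dcal f r c W x = backup x (minimax W x).
Proof. by []. Qed.

Lemma seq_in0 : seq_in Ucal !=set0.
Proof. by have [u0 Uu0] := Ucal0; exists (fun=> u0). Qed.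

Lemma nonanticipative0 : nonanticipative Ucal Dcal !=set0.
Proof.
by have [d0 Dd0] := Dcal0; exists (fun _ _ => d0); split=> [u _ t|u u' T _ _ _ t _].
Qed.

Definition strategy_tail (phi : strategy) (u0 : Uv) : strategy :=
  fun s => phi (scons u0 s) \o succn.

Lemma nonanticipative_tail phi u0 :
  nonanticipative Ucal Dcal phi -> Ucal u0 ->
  nonanticipative Ucal Dcal (strategy_tail phi u0).
Proof.
move=> [phiD phi_na] Uu0; split=> [s Us t | s s' T Us Us' ss' t tT].
  exact: phiD (seq_in_scons Uu0 Us) t.+1.
by apply: (phi_na _ _ T.+1); rewrite ?seq_in_scons // => -[|j] //= /ss'.
Qed.

Definition strategy_cat x (delta : Uv -> Dv) (Psi : X -> strategy) : strategy :=
  fun s => scons (delta (s 0%N)) (Psi (f x (s 0%N) (delta (s 0%N))) (s \o succn)).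

Lemma nonanticipative_cat x delta Psi :
  (forall u0, Ucal u0 -> Dcal (delta u0)) ->
  (forall y, nonanticipative Ucal Dcal (Psi y)) ->
  nonanticipative Ucal Dcal (strategy_cat x delta Psi).
Proof.
move=> deltaD Psi_na; split=> [s Us [|t] | s s' T Us Us' ss' [|t] tT] /=.
- exact/deltaD/Us.
- exact: (Psi_na _).1 (fun j => Us j.+1) t.
- by rewrite ss'.
rewrite ss' //; case: T ss' tT => // T ss' tT.
apply: ((Psi_na _).2 _ _ T) tT => [j | j | j jT] /=; [exact: Us | exact: Us' | exact: ss'].
Qed.

Section Bounded.
Variable M : R.
Hypothesis gamma_le1 : gamma <= 1.
Hypotheses (r_le : forall x, `|r x| <= M) (c_le : forall x, `|c x| <= M).

Let payoff_le x u d : payoff x u d <= M.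
Proof. exact/ler_normlW/(ler_norm_payoff f gamma_ge0 gamma_le1 r_le c_le). Qed.

Lemma ler_norm_strategy_value x phi : `|strategy_value x phi| <= M.
Proof.
apply: ler_norm_sup_image seq_in0 _ => u _.
exact: (ler_norm_payoff f gamma_ge0 gamma_le1 r_le c_le).
Qed.

Lemma ler_norm_value x : `|V x| <= M.
Proof.
exact: ler_norm_inf_image nonanticipative0 (fun phi _ => ler_norm_strategy_value x phi).
Qed.

Lemma bounded_value : bounded_fun V.
Proof. by apply/bounded_funP; exists M; exact: ler_norm_value. Qed.

Let inf_value_le x u0 : inf [set V (f x u0 d) | d in Dcal] <= M.
Proof. by apply/ler_normlW/(ler_norm_inf_image Dcal0) => d _; exact: ler_norm_value. Qed.

Lemma backup_strategy_tail_le x phi u0 :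
  nonanticipative Ucal Dcal phi -> Ucal u0 ->
  backup x (strategy_value (f x u0 (phi (scons u0 (fun=> u0)) 0%N)) (strategy_tail phi u0))
  <= strategy_value x phi.
Proof.
move=> phi_na Uu0; set y := f x u0 _.
have head s : seq_in Ucal s -> phi (scons u0 s) 0%N = phi (scons u0 (fun=> u0)) 0%N.
  move=> Us; have Us0 := seq_in_scons Uu0 (fun=> Uu0).
  by apply: (phi_na.2 _ _ 0%N (seq_in_scons Uu0 Us) Us0 _ 0%N) => // -[].
rewrite -(sup_image_comp seq_in0 (fun s _ => payoff_le y s _) (backup_homo r c gamma_ge0 x)
  (backup_nonexpansive r c gamma_ge0 gamma_le1 x)).
apply: sup_image_le seq_in0 _ => s Us.
have -> : backup x (payoff y s (strategy_tail phi u0 s)) =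
          payoff x (scons u0 s) (phi (scons u0 s)).
  by rewrite [RHS](payoff_succ f gamma_ge0 gamma_le1 r_le c_le) /= head.
exact: image_le_sup (fun s _ => payoff_le x s (phi s)) (seq_in_scons Uu0 Us).
Qed.

Lemma backup_minimax_le_value x : backup x (minimax V x) <= V x.
Proof.
rewrite valueE; apply: inf_image_ge nonanticipative0 _ => phi phi_na.
rewrite /minimax -(sup_image_comp Ucal0 (fun u0 _ => inf_value_le x u0)
  (backup_homo r c gamma_ge0 x) (backup_nonexpansive r c gamma_ge0 gamma_le1 x)).
apply: sup_image_le Ucal0 _ => u0 Uu0.
apply: le_trans _ (backup_strategy_tail_le x phi_na Uu0); apply: backup_homo => //.
set d0 := phi _ 0%N; have Dd0 : Dcal d0 by apply: phi_na.1; apply: seq_in_scons.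
apply: le_trans (inf_le_image (fun d _ => lerNnormlW (ler_norm_value _)) Dd0) _.
rewrite valueE; apply: inf_le_image (nonanticipative_tail phi_na Uu0).
by move=> psi _; exact/lerNnormlW/ler_norm_strategy_value.
Qed.

Lemma value_le_backup_minimax x e : 0 < e -> V x <= backup x (minimax V x) + e.
Proof.
move=> e0; have e20 : 0 < e / 2 by rewrite divr_gt0.
have [delta deltaP] := inf_adherent_choice (fun u0 d => V (f x u0 d)) Dcal0 e20.
have [Psi PsiP] := inf_adherent_choice strategy_value nonanticipative0 e20.
have phi_na := nonanticipative_cat x (fun u0 _ => (deltaP u0).1) (fun y => (PsiP y).1).
rewrite valueE; apply: le_trans (inf_le_image _ phi_na) _.
  by move=> psi _; exact/lerNnormlW/ler_norm_strategy_value.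
apply: sup_image_le seq_in0 _ => s Us.
rewrite (payoff_succ f gamma_ge0 gamma_le1 r_le c_le) /=.
set y := f x (s 0%N) (delta (s 0%N)).
have payoff_le_value :
    payoff y (s \o succn) (Psi y (s \o succn)) <= strategy_value y (Psi y).
  have Us' : seq_in Ucal (s \o succn) by move=> j; exact: Us.
  exact: image_le_sup (fun s _ => payoff_le y s (Psi y s)) Us'.
have inf_le_minimax : inf [set V (f x (s 0%N) d) | d in Dcal] <= minimax V x.
  exact: image_le_sup (fun u0 _ => inf_value_le x u0) (Us 0%N).
have := (PsiP y).2; have := (deltaP (s 0%N)).2; rewrite -/y -valueE => lt_delta lt_Psi.
apply: le_trans (backup_homo r c gamma_ge0 x (_ : _ <= minimax V x + e)) _; first by lra.
exact: backup_leD (ltW e0).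
Qed.

Lemma value_fixpoint : V = bellman gamma Ucal Dcal f r c V.
Proof.
apply/funext => x; apply/eqP; rewrite bellmanE eq_le backup_minimax_le_value andbT.
by apply/ler_addgt0Pr => e e0; exact: value_le_backup_minimax.
Qed.

End Bounded.

Lemma minimax_leD (V1 V2 : X -> R) K x : bounded_fun V1 -> bounded_fun V2 ->
  (forall z, V1 z <= V2 z + K) -> minimax V1 x <= minimax V2 x + K.
Proof.
move=> /bounded_funP[M1 V1_le] /bounded_funP[M2 V2_le] V12.
apply: sup_image_le Ucal0 _ => u0 Uu0.
have inf_le_minimax : inf [set V2 (f x u0 d) | d in Dcal] <= minimax V2 x.
  apply: image_le_sup Uu0 => u _; apply/ler_normlW/(ler_norm_inf_image Dcal0) => d _.
  exact: V2_le.
apply: le_trans (lerD inf_le_minimax (lexx K)); rewrite -lerBlDr.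
apply: inf_image_ge Dcal0 _ => d Dd; rewrite lerBlDr.
apply: le_trans (V12 _); apply: inf_le_image Dd => d' _; exact: lerNnormlW (V1_le _).
Qed.

Lemma ler_dist_minimax (V1 V2 : X -> R) K x : bounded_fun V1 -> bounded_fun V2 ->
  (forall z, `|V1 z - V2 z| <= K) -> `|minimax V1 x - minimax V2 x| <= K.
Proof.
move=> b1 b2 V12; rewrite ler_distl lerBlDr !minimax_leD // => z.
- exact: ler_distlDr.
- exact: ler_distlCDr.
Qed.

Lemma bellman_contraction (V1 V2 : X -> R) : bounded_fun V1 -> bounded_fun V2 ->
  supnorm (bellman gamma Ucal Dcal f r c V1 \- bellman gamma Ucal Dcal f r c V2)
  <= gamma * supnorm (V1 \- V2).
Proof.
move=> b1 b2; apply: supnorm_le => x /=; rewrite !bellmanE.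
apply: le_trans (ler_dist_backup r c gamma_ge0 _ _ _) _; rewrite ler_wpM2l //.
by apply: ler_dist_minimax => // z; exact: ler_norm_supnorm (bounded_funB b1 b2).
Qed.

End Value.

Theorem theorem2 (R : realType) (n m l : nat)
  (Ucal : set 'rV[R]_m) (Dcal : set 'rV[R]_l)
  (f : 'rV[R]_n -> 'rV[R]_m -> 'rV[R]_l -> 'rV[R]_n)
  (r c : 'rV[R]_n -> R) (gamma : R) :
  compact Ucal -> compact Dcal ->
  Ucal !=set0 -> Dcal !=set0 ->
  lipschitz_in_state Ucal Dcal f ->
  bounded_fun r -> lipschitz_fun r ->
  bounded_fun c -> lipschitz_fun c ->
  0 <= gamma -> gamma < 1 ->
  let V := value gamma Ucal Dcal f r c in
  let B := bellman gamma Ucal Dcal f r c in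
  [/\ bounded_fun V,
      V = B V,
      (forall W : 'rV[R]_n -> R, bounded_fun W -> W = B W -> W = V) &
      (forall V1 V2 : 'rV[R]_n -> R, bounded_fun V1 -> bounded_fun V2 ->
         supnorm (B V1 \- B V2) <= gamma * supnorm (V1 \- V2))].
Proof.
move=> _ _ Ucal0 Dcal0 _ /bounded_funP[Mr r_le] _ /bounded_funP[Mc c_le] _ g0 g1 V B.
have r_leM x : `|r x| <= Num.max Mr Mc by rewrite le_max r_le.
have c_leM x : `|c x| <= Num.max Mr Mc by rewrite le_max c_le orbT.
have bV : bounded_fun V := bounded_value f Ucal0 Dcal0 g0 (ltW g1) r_leM c_leM.
have fixV : V = B V := value_fixpoint f Ucal0 Dcal0 g0 (ltW g1) r_leM c_leM.
have contr := bellman_contraction f r c Ucal0 Dcal0 g0.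
split=> // W bW fixW; apply: (supnorm_contraction_eq g1 bW bV).
by have := contr W V bW bV; rewrite -/B -fixW -fixV.
Qed.
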